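(* Under the hypotheses of the following statement, assume in addition that the solution $s(t)$ is persistent. Then $s(t)\to\bar s$ as $t\to\infty$. Statement: consider the generalized mass-action system $\dot s=f(u,s)=\sum_{j=1}^{r}u_j(t)\,s^{v_{\cdot j}}(v'_{\cdot j}-v_{\cdot j})$, $s(0)=s_0\in\mathbb{R}^n_{\ge0}$, with $u:[0,\infty)\to\mathbb{U}\subset\mathbb{R}^r_{>0}$, $\lim_{t\to\infty}u(t)=\bar u\in\mathbb{R}^r_{>0}$, $s(t)$ a bounded solution defined for all $t\ge0$, $\bar s\in\mathbb{R}^n_{>0}$ the unique equilibrium of $\dot s=f(\bar u,s)$ in $(s_0+\mathscr{S})\cap\mathbb{R}^n_{>0}$, and $V$ an ISS-Lyapunov function with respect to $(\bar u,\bar s)$ for this system.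
   Context: A CRN has species $S_1,\dots,S_n$ and reactions $v_{\cdot j}\to v'_{\cdot j}$, $j=1,\dots,r$, $v_{\cdot j},v'_{\cdot j}\in\mathbb{Z}^n_{\ge0}$, $v_{\cdot j}\ne v'_{\cdot j}$; $s^{v}=\prod_i s_i^{v_i}$ with $0^0=1$; $\mathscr{S}=\mathrm{span}\{v'_{\cdot j}-v_{\cdot j}\}$ is the stoichiometric subspace. A solution $s(t)$ is persistent if $\liminf_{t\to\infty}s_i(t)>0$ for every $i=1,\dots,n$. ISS-Lyapunov function with respect to $(\bar u,\bar s)$: a continuous $V:\mathbb{R}^n_{\ge0}\to\mathbb{R}_{\ge0}$ such that (i) $V|_{\mathbb{R}^n_{>0}}$ is $C^1$; (ii) $V(s)\to\infty$ as $|s|\to\infty$; (iii) $V(\bar s)=0$ and $V(s)>0$ for $s\ne\bar s$; (iv) for each compact $F\subset\mathbb{R}^n_{\ge0}$ there exist class $\mathcal{K}_\infty$ functions $\alpha,\rho$ (continuous, strictly increasing, zero at zero, unbounded) with $\nabla V(s)^\top f(u,s)\le-\alpha(|s-\bar s|)+\rho(|u-\bar u|)$ for all $u\in\mathbb{U}$, $s\in F\cap(s_0+\mathscr{S})\cap\mathbb{R}^n_{>0}$. *)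

From HB Require Import structures.
From mathcomp Require Import all_boot all_order all_algebra.
From mathcomp Require Import all_classical all_reals all_analysis.
Set Implicit Arguments. Unset Strict Implicit. Unset Printing Implicit Defensive.
Import Order.TTheory GRing.Theory Num.Theory.
Import numFieldNormedType.Exports.
Local Open Scope classical_set_scope.
Local Open Scope ring_scope.

Section CRN.
Variable R : realType.

Definition enorm (n : nat) (x : 'rV[R]_n) : R := Num.sqrt (\sum_i x 0 i ^+ 2).

Definition nonneg_orthant (n : nat) : set 'rV[R]_n := [set x | forall i, 0 <= x 0 i].
Definition pos_orthant (n : nat) : set 'rV[R]_n := [set x | forall i, 0 < x 0 i].
Arguments nonneg_orthant n : clear implicits.
Arguments pos_orthant n : clear implicits.

(* A CRN with n species and r reactions: column j of v (resp. vp) is the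
   reactant complex v_{.j} (resp. product complex v'_{.j}). *)
Definition reac_vec (n r : nat) (v vp : 'M[nat]_(n, r)) (j : 'I_r) : 'rV[R]_n :=
  \row_i ((vp i j)%:R - (v i j)%:R).

(* monomial s^{v_{.j}} = prod_i s_i^{v_ij} (with 0^0 = 1) *)
Definition monom (n r : nat) (v : 'M[nat]_(n, r)) (j : 'I_r) (s : 'rV[R]_n) : R :=
  \prod_i s 0 i ^+ v i j.

Definition gma_field (n r : nat) (v vp : 'M[nat]_(n, r)) (u : 'rV[R]_r) (s : 'rV[R]_n)
  : 'rV[R]_n :=
  \sum_j (u 0 j * monom v j s) *: reac_vec v vp j.

Definition stoich_subspace (n r : nat) (v vp : 'M[nat]_(n, r)) : set 'rV[R]_n :=
  [set x | exists c : 'I_r -> R, x = \sum_j c j *: reac_vec v vp j].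

Definition classKinf (a : R -> R) : Prop :=
  {within `[0, +oo[, continuous a} /\
  (forall x y, 0 <= x -> x < y -> a x < a y) /\
  a 0 = 0 /\
  (forall M, exists x, 0 <= x /\ M <= a x).

Definition C1_on (n : nat) (A : set 'rV[R]_n) (V : 'rV[R]_n -> R) : Prop :=
  (forall x, A x -> differentiable V x) /\
  (forall i : 'I_n, forall x, A x ->
     {for x, continuous (fun y => 'D_(delta_mx 0 i) V y)}).

Definition ISS_Lyapunov (n r : nat) (v vp : 'M[nat]_(n, r)) (U : set 'rV[R]_r)
  (s0 : 'rV[R]_n) (ubar : 'rV[R]_r) (sbar : 'rV[R]_n) (V : 'rV[R]_n -> R) : Prop :=
  {within nonneg_orthant n, continuous V} /\
  (forall s, nonneg_orthant n s -> 0 <= V s) /\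
  C1_on (pos_orthant n) V /\
  (forall M, exists N, forall s, nonneg_orthant n s -> N <= enorm s -> M <= V s) /\
  V sbar = 0 /\ (forall s, nonneg_orthant n s -> s != sbar -> 0 < V s) /\
  (forall F : set 'rV[R]_n, compact F -> F `<=` nonneg_orthant n ->
     exists alpha rho, classKinf alpha /\ classKinf rho /\
       forall w s, U w -> F s -> stoich_subspace v vp (s - s0) -> pos_orthant n s ->
         'd V s (gma_field v vp w s) <= - alpha (enorm (s - sbar)) + rho (enorm (w - ubar))).

Definition persistent (n : nat) (s : R -> 'rV[R]_n) : Prop :=
  forall i, (0 < limf_einf (fun t => (s t 0 i)%:E) (pinfty_nbhs R))%E.

End CRN.
Arguments nonneg_orthant R n : clear implicits.
Arguments pos_orthant R n : clear implicits.

From HB Require Import structures.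
From mathcomp Require Import all_boot all_order all_algebra.
From mathcomp Require Import all_classical all_reals all_analysis.
From mathcomp Require Import ring lra.
Set Implicit Arguments. Unset Strict Implicit. Unset Printing Implicit Defensive.
Import Order.TTheory GRing.Theory Num.Theory.
Import numFieldNormedType.Exports.
Local Open Scope classical_set_scope.
Local Open Scope ring_scope.

(* Persistence and boundedness trap the trajectory, from some time on, in a
   compact box F inside the positive orthant, and stoichiometric classes are
   invariant; so the ISS estimate dV/dt <= -alpha(|s - sbar|) + rho(|u - ubar|)
   holds along the trajectory with fixed class-K functions alpha and rho.
   Given eps, V exceeds some level th on the part of F at distance >= eps from
   sbar, while V < th on a ball of radius d around sbar.  Once
   rho(|u - ubar|) < alpha(d)/2, which holds eventually since u -> ubar,
   V(s(t)) decreases at rate alpha(d)/2 whenever it is above th; hence it falls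
   below th and stays there, and |s(t) - sbar| < eps from then on. *)

Section Sublevel.
Variable R : realType.
Implicit Types (g dg : R -> R) (a b c th T : R).

Lemma sublevel_forward_invariant g dg a b th : a <= b ->
  (forall x, a <= x <= b -> is_derive x 1 g (dg x)) ->
  (forall x, a < x < b -> th < g x -> dg x <= 0) ->
  g a <= th -> g b <= th.
Proof.
move=> ab gd gneg ga; rewrite leNgt; apply/negP => gb.
have gc x : a <= x <= b -> {for x, continuous g}.
  move=> /gd dx; apply: differentiable_continuous.
  by apply/derivable1_diffP; exact: ex_derive.
pose E := [set t | a <= t <= b /\ g t <= th].
have Ea : E a by split => //; rewrite lexx ab.
have hsE : has_sup E by split; [exists a | exists b => t [/andP[]]].
pose sg := sup E.
have asg : a <= sg := sup_upper_bound hsE Ea.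
have sgb : sg <= b by apply: ge_sup; [exists a | move=> t [/andP[]]].
(* [sg] is the last time in [a, b] where [g] is below the level; it must lie
   below it by continuity, and after it [g] only decreases. *)
have gsg : g sg <= th.
  rewrite leNgt; apply/negP => hsg.
  have /nbhs_ballP[e /= e0 He] : \forall t \near sg, th < g t.
    exact: (cvgr_gt _ (gc sg (introT andP (conj asg sgb))) _ hsg).
  have [y Ey sgy] := sup_adherent e0 hsE.
  have ysg : y <= sg := sup_upper_bound hsE Ey.
  have : th < g y.
    apply: He; rewrite -ball_normE /ball_ /= ger0_norm ?subr_ge0 //.
    by rewrite ltrBlDr addrC -ltrBlDr.
  by rewrite ltNge; case: Ey => _ ->.
have sgb' : sg < b.
  by rewrite lt_neqAle sgb andbT; apply: contraTneq gb => <-; rewrite -leNgt.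
have [c /[!in_itv] /= /andP[sgc cb] hc] :
    exists2 c, c \in `]sg, b[%R & g b - g sg = dg c * (b - sg).
  apply: MVT => // [x /[!in_itv] /= /andP[sgx xb]|].
    by apply: gd; rewrite (ltW xb) andbT (le_trans asg (ltW sgx)).
  apply: continuous_in_subspaceT => x /[!inE] /= /[!in_itv] /= /andP[sgx xb].
  by apply: gc; rewrite xb (le_trans asg sgx).
have gcth : th < g c.
  rewrite ltNge; apply/negP => gcle.
  have : c <= sg.
    apply: (sup_upper_bound hsE); split => //.
    by rewrite (ltW cb) (le_trans asg (ltW sgc)).
  by rewrite leNgt sgc.
have : g b - g sg <= 0.
  rewrite hc mulr_le0_ge0 //; last by rewrite subr_ge0 ltW.
  by apply: (gneg c _ gcth); rewrite cb (le_lt_trans asg sgc).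
by rewrite subr_le0 => /le_trans /(_ gsg); rewrite leNgt gb.
Qed.

Lemma derive_le_neg_hits_sublevel g dg T c th : 0 < c ->
  (forall x, T < x -> is_derive x 1 g (dg x)) ->
  (forall x, T < x -> 0 <= g x) ->
  (forall x, T < x -> th <= g x -> dg x <= - c) ->
  exists2 t, T < t & g t < th.
Proof.
move=> c0 gd gpos gneg; apply: contrapT => hn.
have above x : T < x -> th <= g x.
  by move=> Tx; rewrite leNgt; apply/negP => gx; apply: hn; exists x.
(* Decreasing at rate [c] from [g a], [g] would be negative after time [g a / c]. *)
pose a := T + 1; pose b := a + g a / c + 1.
have Ta : T < a by rewrite ltrDl.
have ab : a < b by rewrite /b -addrA ltrDl ltr_wpDl // divr_ge0 // ?gpos // ltW.
have [x /[!in_itv] /= /andP[ax xb] hx] :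
    exists2 x, x \in `]a, b[%R & g b - g a = dg x * (b - a).
  apply: MVT => // [x /[!in_itv] /= /andP[ax _]|].
    by apply: gd; exact: lt_trans Ta ax.
  apply: continuous_in_subspaceT => x /[!inE] /= /[!in_itv] /= /andP[ax _].
  apply: differentiable_continuous; apply/derivable1_diffP.
  have dx := gd x (lt_le_trans Ta ax); exact: ex_derive.
have Tx : T < x := lt_trans Ta ax.
have : g b - g a <= - c * (b - a).
  rewrite hx; apply: ler_wpM2r; first by rewrite subr_ge0 ltW.
  exact: gneg Tx (above x Tx).
have -> : - c * (b - a) = - g a - c by rewrite /b; field; exact: lt0r_neq0.
have := gpos b (lt_trans Ta ab); lra.
Qed.

Lemma eventually_sublevel g dg c th : 0 < c ->
  (\forall x \near +oo, [/\ is_derive (x : R) 1 g (dg x), 0 <= g x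
                          & th <= g x -> dg x <= - c]) ->
  \forall t \near +oo, g t <= th.
Proof.
move=> c0 [T [Treal HT]].
have [ts Tts gts] : exists2 t, T < t & g t < th.
  by apply: (derive_le_neg_hits_sublevel (dg := dg) c0) => x /HT[].
exists ts; split; first exact: num_real.
move=> t tst; apply: (sublevel_forward_invariant (dg := dg) (ltW tst)) (ltW gts).
- by move=> x /andP[tsx _]; have [] := HT x (lt_le_trans Tts tsx).
- move=> x /andP[tsx _] hth; have [_ _ neg] := HT x (lt_trans Tts tsx).
  by apply: le_trans (neg (ltW hth)) _; rewrite oppr_le0 ltW.
Qed.

End Sublevel.

Section Analysis.
Variable R : realType.

Lemma is_derive_diff_comp (U W : normedModType R) (V : U -> W) (s : R -> U)
    (t : R) (w : U) :
  is_derive t 1 s w -> differentiable V (s t) ->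
  is_derive t 1 (V \o s) ('d V (s t) w).
Proof.
move=> ds dV.
have dfs : differentiable s t by apply/derivable1_diffP; exact: ex_derive.
have -> : 'd V (s t) w = 'D_1 (V \o s) t.
  rewrite (@deriveE _ _ _ (V \o s)); last exact: differentiable_comp.
  by rewrite (diff_comp dfs dV) /= -(@deriveE _ _ _ s t 1 dfs) derive_val.
by apply: derivableP; apply: diff_derivable; exact: differentiable_comp.
Qed.

Lemma mulmx_coord_continuous n m (C : 'M[R]_(n, m)) k :
  continuous (fun x : 'rV[R]_n => (x *m C) 0 k).
Proof.
have -> : (fun x : 'rV[R]_n => (x *m C) 0 k) =
    \sum_(i < n) (fun x : 'rV[R]_n => x 0 i * C i k).
  by apply/funext => x; rewrite fct_sumE mxE.
move=> x; apply: differentiable_continuous; apply: differentiable_sum => i.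
apply: differentiableM; first exact: differentiable_coord.
exact: differentiable_cst.
Qed.

Lemma mulmx_const_of_derive_in_kernel n m (C : 'M[R]_(n, m)) (y dy : R -> 'rV[R]_n) :
  {within `[0, +oo[, continuous y} ->
  (forall t : R, 0 < t -> is_derive t 1 y (dy t)) ->
  (forall t, 0 < t -> dy t *m C = 0) ->
  forall t, 0 <= t -> y t *m C = y 0 *m C.
Proof.
move=> yc yd dyC t; case: (ltrgt0P t) => // [t0 _ | -> //].
apply/rowP => k.
pose h := fun x : 'rV[R]_n => (x *m C) 0 k.
have hlin : linear h by move=> a x z; rewrite /h mulmxDl -scalemxAl !mxE.
pose hL : {linear 'rV[R]_n -> R} := HB.pack h (GRing.isLinear.Build _ _ _ _ _ hlin).
have hc : continuous hL by exact: mulmx_coord_continuous.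
have [c _] : exists2 c, c \in `]0, t[%R & (hL \o y) t - (hL \o y) 0 = 0 * (t - 0).
  apply: MVT => // [x /[!in_itv] /= /andP[x0 _] | x].
    have := is_derive_diff_comp (yd x x0) (linear_differentiable _ hc).
    by rewrite (diff_lin _ hc) /= /h dyC // mxE.
  apply: continuous_comp (hc _).
  apply: continuous_subspaceW yc x => z /=; rewrite !in_itv /= => /andP[-> _] //.
by rewrite mul0r => /eqP; rewrite subr_eq0 => /eqP.
Qed.

Lemma posdef_gt_off_ball n (V : 'rV[R]_n -> R) (F : set 'rV[R]_n) (a : 'rV[R]_n) e :
  compact F -> {within F, continuous V} ->
  (forall x, F x -> x != a -> 0 < V x) -> 0 < e ->
  exists2 th, 0 < th & forall x, F x -> e <= `|x - a| -> th < V x.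
Proof.
move=> cF cV Vpos e0.
pose K := F `&` ~` ball a e.
have Kfar x : K x -> e <= `|x - a|.
  case=> _ nb; rewrite leNgt distrC; apply/negP => hb; apply: nb.
  by rewrite -ball_normE /ball_ /=.
have KV x : K x -> 0 < V x.
  move=> Kx; apply: Vpos; first by case: Kx.
  by apply/eqP => xa; move: (Kfar x Kx); rewrite xa subrr normr0 leNgt e0.
(* [V @` K] is compact, hence closed, and it misses [0]. *)
have cK : compact K.
  by apply: compact_closedI cF _; apply: open_closedC; exact: ball_open.
have cVK : compact (V @` K).
  by apply: continuous_compact cK; apply: continuous_subspaceW cV => x [].
have /nbhs_ballP[d /= d0 Hd] : nbhs (0 : R) (~` (V @` K)).
  apply: open_nbhs_nbhs; split.
    by apply: closed_openC; apply: compact_closed cVK; exact: Rhausdorff.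
  by move=> [x Kx Vx0]; have := KV x Kx; rewrite Vx0 ltxx.
exists (d / 2) => [|x Fx far]; first by rewrite divr_gt0.
have Kx : K x.
  split => //; rewrite /setC -ball_normE /ball_ /= distrC => hb.
  by have := le_lt_trans far hb; rewrite ltxx.
have : ~ ball (0 : R) d (V x) by move=> /Hd; apply; exists x.
rewrite -ball_normE /ball_ /= sub0r normrN ger0_norm ?ltW ?KV //.
move=> /negP; rewrite -leNgt; apply: lt_le_trans.
by rewrite ltr_pdivrMr // ltr_pMr // ltr1n.
Qed.

End Analysis.

Section RowNorms.
Variable R : realType.

Lemma rV_entry_le_normr n (x : 'rV[R]_n) i : `|x 0 i| <= `|x|.
Proof.
have /mapP[j Hj ->] : `|x ord0 i| \in [seq `|x k.1 k.2| | k : 'I_1 * 'I_n].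
  by apply/mapP; exists (ord0, i) => //=; rewrite mem_enum.
by rewrite [leRHS]/Num.norm /= mx_normrE; apply/bigmax_geP; right => /=; exists j.
Qed.

Lemma normr_le_enorm n (x : 'rV[R]_n) : `|x| <= enorm x.
Proof.
rewrite [leLHS]/Num.norm /= mx_normrE; apply/bigmax_leP; split.
  exact: sqrtr_ge0.
move=> [a b] _ /=; rewrite (ord1 a) -sqrtr_sqr /enorm ler_sqrt; last first.
  by apply: sumr_ge0 => i _; rewrite sqr_ge0.
by rewrite (bigD1 b) //= lerDl; apply: sumr_ge0 => i _; exact: sqr_ge0.
Qed.

Lemma enorm_le_normr n (x : 'rV[R]_n) : enorm x <= Num.sqrt n%:R * `|x|.
Proof.
rewrite /enorm -[in leRHS](ger0_norm (normr_ge0 x)) -(sqrtr_sqr `|x|).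
rewrite -sqrtrM // ler_wsqrtr //.
apply: (@le_trans _ _ (\sum_(i < n) `|x| ^+ 2)).
  apply: ler_sum => i _.
  by rewrite -[x 0 i ^+ 2]real_normK ?num_real // lerXn2r ?nnegrE ?rV_entry_le_normr.
by rewrite sumr_const card_ord mulr_natl.
Qed.

End RowNorms.

Section ClassKinf.
Variable R : realType.

Lemma classKinf_lt_near0 (rho : R -> R) : classKinf rho ->
  forall e, 0 < e -> exists2 d, 0 < d & forall x, 0 <= x -> x < d -> rho x < e.
Proof.
case=> rc [_ [r0 _]] e e0.
have A0 : [set` `[0, +oo[%R] (0 : R) by rewrite /= in_itv /= lexx.
have : \forall x \near within [set` `[0, +oo[%R] (nbhs (0 : R)), rho x < e.
  apply: (cvgr_lt _ ((iffLR (subspace_continuousP _ _)) rc 0 A0)).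
  by rewrite /from_subspace r0.
rewrite /within => /nbhs_ballP [d /= d0 Hd].
exists d => // x x0 xd; apply: (Hd x).
  by rewrite -ball_normE /ball_ /= sub0r normrN ger0_norm.
by rewrite /= in_itv /= x0.
Qed.

Lemma classKinf_gt0 (alpha : R -> R) (x : R) : classKinf alpha ->
  0 < x -> 0 < alpha x.
Proof. by case=> _ [ainc [a0 _]] x0; rewrite -a0 ainc. Qed.

Lemma classKinf_le (alpha : R -> R) (x y : R) : classKinf alpha ->
  0 <= x -> x <= y -> alpha x <= alpha y.
Proof.
case=> _ [ainc _] x0; rewrite le_eqVlt => /orP[/eqP-> //|xy].
exact/ltW/ainc.
Qed.

Lemma classKinf_enorm_cvg_lt T (F : set_system T) {FF : Filter F} m
    (u : T -> 'rV[R]_m) (ubar : 'rV[R]_m) (rho : R -> R) (e : R) :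
  classKinf rho -> u @ F --> ubar -> 0 < e ->
  \forall t \near F, rho (enorm (u t - ubar)) < e.
Proof.
move=> rK ucvg e0; have [d d0 Hd] := classKinf_lt_near0 rK e0.
pose K : R := Num.sqrt m%:R + 1.
have K0 : 0 < K by rewrite ltr_wpDl ?sqrtr_ge0.
have : \forall t \near F, `|ubar - u t| < d / K.
  by move: ucvg => /cvgrPdist_lt; apply; rewrite divr_gt0.
apply: filterS => t ut; apply: Hd; first exact: sqrtr_ge0.
apply: le_lt_trans (enorm_le_normr _) _.
apply: (@le_lt_trans _ _ (K * `|u t - ubar|)); first by rewrite ler_wpM2r // lerDl.
by rewrite -(divfK (lt0r_neq0 K0) d) mulrC ltr_pM2r // distrC.
Qed.

End ClassKinf.

Section Persistence.
Variable R : realType.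

Lemma liminf_gt0_eventually_ge (f : R -> R) :
  (0 < limf_einf (fun t => (f t)%:E) (pinfty_nbhs R))%E ->
  exists2 d, 0 < d & \forall t \near +oo, d <= f t.
Proof.
rewrite limf_einfE => /ereal_sup_gt [y [W PW <-]] y0.
have lb t : W t -> (ereal_inf [set (f x)%:E | x in W] <= (f t)%:E)%E.
  by move=> Wt; apply: ereal_inf_lbound; exists t.
move: y0 lb; case: (ereal_inf _) => [r| |] //= r0 lb.
- exists r; first by rewrite -lte_fin.
  by apply: filterS PW => t /lb; rewrite lee_fin.
- by exists 1 => //; apply: filterS PW => t /lb; rewrite leye_eq.
Qed.

Lemma persistent_eventually_ge n (s : R -> 'rV[R]_n) : persistent s ->
  exists2 d : 'I_n -> R, (forall i, 0 < d i)
    & \forall t \near +oo, forall i, d i <= s t 0 i.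
Proof.
move=> hp.
have /choice[d hd] i : exists d, 0 < d /\ \forall t \near +oo, d <= s t 0 i.
  by have [d ? ?] := liminf_gt0_eventually_ge (hp i); exists d.
exists d => [i|]; first by case: (hd i).
by apply: filter_forall => i; case: (hd i).
Qed.

Lemma persistent_bounded_eventually_in_compact n (s : R -> 'rV[R]_n) M :
  persistent s -> (forall t, 0 <= t -> enorm (s t) <= M) ->
  exists2 F : set 'rV[R]_n, compact F /\ F `<=` pos_orthant R n
    & \forall t \near +oo, F (s t).
Proof.
move=> /persistent_eventually_ge[d d0 hd] hM.
exists [set x | forall i, `[d i, M]%classic (x 0 i)].
  split; first exact: (rV_compact (fun i => @segment_compact _ (d i) M)).
  by move=> x Fx i; have /andP[dx _] := Fx i; exact: lt_le_trans (d0 i) dx.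
apply: filterS2 hd (nbhs_pinfty_ge (num_real 0)) => t hdt t0 i.
rewrite /= in_itv /= hdt /=; apply: le_trans (hM t t0).
apply: le_trans (normr_le_enorm _).
exact: le_trans (ler_norm _) (rV_entry_le_normr _ _).
Qed.

End Persistence.

Section Stoichiometry.
Variables (R : realType) (n r : nat) (v vp : 'M[nat]_(n, r)).

Definition reac_mx : 'M[R]_(r, n) := \matrix_(j, i) reac_vec R v vp j 0 i.

Lemma row_reac_mx j : row j reac_mx = reac_vec R v vp j.
Proof. by apply/rowP => i; rewrite !mxE. Qed.

Lemma submx_reac_mx_stoich (x : 'rV[R]_n) : (x <= reac_mx)%MS -> stoich_subspace v vp x.
Proof.
case/submxP => D ->; exists (fun j => D 0 j).
by rewrite mulmx_sum_row; apply: eq_bigr => j _; rewrite row_reac_mx.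
Qed.

Lemma gma_field_mulmx_coker w (x : 'rV[R]_n) :
  gma_field v vp w x *m cokermx reac_mx = 0.
Proof.
rewrite /gma_field mulmx_suml big1 // => j _.
by rewrite -scalemxAl -row_reac_mx -row_mul mulmx_coker row0 scaler0.
Qed.

Lemma stoich_invariant (u : R -> 'rV[R]_r) (s : R -> 'rV[R]_n) :
  {within `[0, +oo[, continuous s} ->
  (forall t : R, 0 < t -> is_derive t 1 s (gma_field v vp (u t) (s t))) ->
  forall t, 0 <= t -> stoich_subspace v vp (s t - s 0).
Proof.
move=> sc sd t t0; apply: submx_reac_mx_stoich; rewrite submxE mulmxBl.
rewrite (mulmx_const_of_derive_in_kernel sc sd) ?subrr // => t' _.
exact: gma_field_mulmx_coker.
Qed.

End Stoichiometry.

Theorem corollary3p3 (R : realType) (n r : nat) (v vp : 'M[nat]_(n, r))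
  (U : set 'rV[R]_r) (u : R -> 'rV[R]_r) (ubar : 'rV[R]_r)
  (s : R -> 'rV[R]_n) (s0 sbar : 'rV[R]_n) (V : 'rV[R]_n -> R) :
  (forall j : 'I_r, col j v != col j vp) ->
  U `<=` pos_orthant R r ->
  (forall t : R, 0 <= t -> U (u t)) ->
  pos_orthant R r ubar ->
  u t @[t --> +oo] --> ubar ->
  nonneg_orthant R n s0 ->
  s 0 = s0 ->
  {within `[0, +oo[, continuous s} ->
  (forall t : R, 0 < t -> is_derive t 1 s (gma_field v vp (u t) (s t))) ->
  (exists M, forall t : R, 0 <= t -> enorm (s t) <= M) ->
  pos_orthant R n sbar ->
  stoich_subspace v vp (sbar - s0) ->
  gma_field v vp ubar sbar = 0 ->
  (forall x, pos_orthant R n x -> stoich_subspace v vp (x - s0) ->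
     gma_field v vp ubar x = 0 -> x = sbar) ->
  ISS_Lyapunov v vp U s0 ubar sbar V ->
  persistent s ->
  s t @[t --> +oo] --> sbar.
Proof.
move=> _ _ Uu _ ucvg _ <- sc sd [M sM] sbar_pos _ _ _.
move=> [Vc [V_ge0 [[Vdiff _] [_ [V0 [Vpos ISS]]]]]] sp.
have [F [cF Fpos] sF] := persistent_bounded_eventually_in_compact sp sM.
have Fnn : F `<=` nonneg_orthant R n by move=> x /Fpos + i => /(_ i)/ltW.
have [alpha [rho [aK [rK ISS_bound]]]] := ISS F cF Fnn.
apply/cvgrPdist_lt => e e0.
have [th th0 Vth] := posdef_gt_off_ball cF (continuous_subspaceW Fnn Vc)
  (fun x Fx => Vpos x (Fnn x Fx)) e0.
have /nbhs_ballP[d /= d0 Vd] : \forall x \near sbar, V x < th.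
  by apply: (cvgr_lt _ (differentiable_continuous (Vdiff _ sbar_pos))); rewrite V0.
pose c := alpha d / 2.
have c0 : 0 < c by rewrite divr_gt0 // classKinf_gt0.
have : \forall t \near +oo, V (s t) <= th.
  pose dVs t := 'd V (s t) (gma_field v vp (u t) (s t)).
  apply: (eventually_sublevel (dg := dVs) c0).
  near=> t.
  have t0 : 0 < t by near: t; exact: nbhs_pinfty_gt.
  have Fst : F (s t) by near: t.
  have rho_small : rho (enorm (u t - ubar)) < c.
    by near: t; exact: classKinf_enorm_cvg_lt.
  split=> [||above]; [exact: is_derive_diff_comp (sd t t0) (Vdiff _ (Fpos _ Fst))
                     | exact: V_ge0 (Fnn _ Fst) |].
  have far : d <= enorm (s t - sbar).
    apply: le_trans (normr_le_enorm _); rewrite distrC leNgt; apply/negP => close.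
    by have := Vd (s t); rewrite -ball_normE ltNge above => /(_ close).
  have := ISS_bound (u t) (s t) (Uu t (ltW t0)) Fst (stoich_invariant sc sd (ltW t0))
    (Fpos _ Fst).
  have := classKinf_le aK (ltW d0) far; move: rho_small; rewrite /c /=; lra.
apply: filterS2 sF => t Fst Vst; rewrite distrC ltNge; apply/negP => far.
by have := Vth _ Fst far; rewrite ltNge Vst.
Unshelve. all: by end_near.
Qed.
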